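(* For any $d\ge0$, $k\ge2$ and $\theta\in(0,1]$ such that $k\theta^2>2$, $$\mathbb{P}\Big[\sum_{i\in L_d}X^{(d)}_i\le k^d/2\ \Big|\ X^{(0)}=1\Big]\le \frac{1}{\theta^2k-1}.$$
   Context: Broadcast (Ising) tree model: complete $k$-ary tree of depth $d$ with root $\rho$; $L_d$ = leaves; $\sigma_\rho$ uniform on $\{0,1\}$; each child $v$ of $u$ independently has $\sigma_v=\sigma_u$ with probability $(1+\theta)/2$ and $1-\sigma_u$ otherwise; $X^{(r)}=(\sigma_v)_{v\in L_r}$. *)

(* Broadcast (Ising) model on the complete k-ary tree of depth d,
   with the joint law of all spins given explicitly as a finite distribution. *)
From HB Require Import structures.
From mathcomp Require Import all_boot all_order all_algebra.
Set Implicit Arguments. Unset Strict Implicit. Unset Printing Implicit Defensive.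
Import Order.TTheory GRing.Theory Num.Theory.
Local Open Scope ring_scope.

(* Vertices of the complete k-ary tree of depth d: a vertex at level r
   (0 <= r <= d) is the sequence of child indices on the path from the root. *)
Definition vertex (d k : nat) : finType := {r : 'I_d.+1 & r.-tuple 'I_k}.

Definition vlevel d k (v : vertex d k) : nat := tag v.
Definition vpath d k (v : vertex d k) : seq 'I_k := val (tagged v).

Definition is_child d k (u v : vertex d k) : bool :=
  (vlevel v == (vlevel u).+1) && (take (vlevel u) (vpath v) == vpath u).

(* Spin configurations on all vertices; spins in {0,1} encoded as bool (true = 1). *)
Definition config (d k : nat) : finType := {ffun vertex d k -> bool}.

(* Root spin uniform; each child agrees with its parent w.p. (1+theta)/2,
   independently. *)
Definition edge_weight (R : realFieldType) (theta : R) (a b : bool) : R :=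
  if a == b then (1 + theta) / 2 else (1 - theta) / 2.

Definition config_prob (R : realFieldType) (d k : nat) (theta : R)
  (s : config d k) : R :=
  (1 / 2) * \prod_(u : vertex d k) \prod_(v : vertex d k | is_child u v)
              edge_weight theta (s u) (s v).

Definition root_spin d k (s : config d k) : bool :=
  \big[orb/false]_(v : vertex d k | vlevel v == 0%N) s v.

Definition leaf_sum d k (s : config d k) : nat :=
  \sum_(v : vertex d k | vlevel v == d) (s v : nat).

Definition Prob (R : realFieldType) d k (theta : R) (E : pred (config d k)) : R :=
  \sum_(s : config d k | E s) config_prob theta s.

Definition CondProb (R : realFieldType) d k (theta : R)
  (E F : pred (config d k)) : R :=
  Prob theta (predI E F) / Prob theta F.

From HB Require Import structures.
From mathcomp Require Import all_boot all_order all_algebra.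
From mathcomp Require Import ring lra.
Import Order.TTheory GRing.Theory Num.Theory.
Local Open Scope ring_scope.

(* Let Z = sum over the leaves l of (2 sigma_l - 1) be the leaf magnetization
   and m = (k theta)^d its conditional mean given root spin 1.  The event
   "leaf_sum <= k^d / 2" is "Z <= 0", so the one-sided second-moment bound gives
   P[Z <= 0 | root] <= E[(Z - m)^2 | root] / m^2 = (E[Z^2 | root] - m^2) / m^2.
   Both moments are computed by describing a configuration through its root
   spin and its independent edge flips: a leaf sign is the product of the flip
   signs along its root path, and the product of the flip signs over a set S
   of edges has mean theta^|S|.  Hence the conditional second moment M_r of the
   level-r magnetization is a sum of theta^(dist v v') over pairs of level-r
   vertices, so M_(r+1) = k^2 theta^2 M_r + k (1 - theta^2) k^r; for
   x = k theta^2 > 1 this gives M_d (x - 1) <= k^d (x^(d+1) - 1), and the ratio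
   above is then at most 1 / (x - 1). *)

Set Implicit Arguments. Unset Strict Implicit. Unset Printing Implicit Defensive.

Section Tree.
Variables d k : nat.
Local Notation V := (vertex d k).

Lemma vpath_size (v : V) : size (vpath v) = vlevel v.
Proof. by case: v => r t; rewrite /vpath /vlevel /= size_tuple. Qed.

Lemma vlevel_leq (v : V) : (vlevel v <= d)%N.
Proof. by case: v => r t; rewrite /vlevel /= -ltnS ltn_ord. Qed.

Lemma vpath_inj : injective (@vpath d k).
Proof.
case=> r t [r' t'] eq_path.
have eq_r : r = r'.
  by apply: val_inj; rewrite /= -(size_tuple t) -(size_tuple t'); congr size.
subst r'; congr existT; exact: val_inj.
Qed.

Definition vroot : V := existT (fun r : 'I_d.+1 => r.-tuple 'I_k) ord0 [tuple].

Lemma vlevel_eq0 (v : V) : (vlevel v == 0%N) = (v == vroot).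
Proof.
apply/eqP/eqP => [lv0|-> //]; apply: vpath_inj.
by apply/eqP; rewrite -size_eq0 vpath_size lv0.
Qed.

(* Junk value [vroot] when [size p > d]. *)
Definition vertex_of_path (p : seq 'I_k) : V :=
  odflt vroot [pick v : V | vpath v == p].

Lemma vpath_vertex_of_path p : (size p <= d)%N -> vpath (vertex_of_path p) = p.
Proof.
move=> lep; rewrite /vertex_of_path; case: pickP => [v /eqP // | no_v].
have := no_v (Tagged (fun r : 'I_d.+1 => r.-tuple 'I_k)
                     (@Tuple (@Ordinal d.+1 (size p) lep) _ p (eqxx _))).
by rewrite /vpath /= eqxx.
Qed.

Definition parent (v : V) : V := vertex_of_path (take (vlevel v).-1 (vpath v)).

Lemma vpath_parent v : vpath (parent v) = take (vlevel v).-1 (vpath v).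
Proof.
apply: vpath_vertex_of_path; rewrite size_take_min vpath_size.
exact: leq_trans (geq_minr _ _) (vlevel_leq v).
Qed.

Lemma vlevel_parent v : vlevel (parent v) = (vlevel v).-1.
Proof.
rewrite -vpath_size vpath_parent size_take_min vpath_size.
exact/minn_idPl/leq_pred.
Qed.

Lemma is_child_level (u v : V) : is_child u v -> vlevel v = (vlevel u).+1.
Proof. by case/andP => /eqP. Qed.

Lemma is_childE (u v : V) : is_child u v = (v != vroot) && (u == parent v).
Proof.
rewrite -vlevel_eq0; apply/andP/andP => [[/eqP lv /eqP pv] | [lv /eqP ->]].
  split; first by rewrite lv.
  by apply/eqP/vpath_inj; rewrite vpath_parent lv.
by rewrite vlevel_parent vpath_parent prednK ?lt0n.
Qed.

Lemma is_child_neq_root (u v : V) : is_child u v -> v != vroot.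
Proof. by rewrite is_childE => /andP[]. Qed.

Lemma card_children (v : V) : (vlevel v < d)%N ->
  #|[pred c | is_child v c]| = k.
Proof.
move=> lt_vd.
pose child_at (i : 'I_k) := vertex_of_path (rcons (vpath v) i).
have size_child i : (size (rcons (vpath v) i) <= d)%N by rewrite size_rcons vpath_size.
have child_atK i : vpath (child_at i) = rcons (vpath v) i.
  exact: vpath_vertex_of_path.
rewrite -[RHS](card_ord k) -(card_image (f := child_at)); last first.
  by move=> i j /(congr1 (@vpath d k)); rewrite !child_atK => /rcons_inj[].
apply: eq_card => c; rewrite inE /is_child -vpath_size.
apply/andP/imageP => [[/eqP lc /eqP pc] | [i _ ->]]; last first.
  by rewrite -!vpath_size child_atK size_rcons -cats1 take_size_cat.
move: lc pc; case/lastP E: (vpath c) => [|p i] //; rewrite size_rcons => -[lp].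
rewrite -cats1 -lp take_size_cat // => pv; exists i => //.
by apply: vpath_inj; rewrite child_atK E pv.
Qed.

Definition ancestor (w v : V) : bool := take (vlevel w) (vpath v) == vpath w.

Lemma ancestor_level (w v : V) : ancestor w v -> (vlevel w <= vlevel v)%N.
Proof.
move/eqP=> E; rewrite -[vlevel w]vpath_size -E size_take_min vpath_size.
exact: geq_minr.
Qed.

Lemma ancestor_root w : ancestor w vroot -> w = vroot.
Proof. by move/ancestor_level; rewrite leqn0 vlevel_eq0 => /eqP. Qed.

Lemma ancestor_parent (w v : V) : v != vroot ->
  ancestor w v = (w == v) || ancestor w (parent v).
Proof.
rewrite -vlevel_eq0 -lt0n => lv_gt0; rewrite /ancestor vpath_parent.
have take_long (s : seq 'I_k) (t : V) n :
    (size s < vlevel t)%N -> (take n s == vpath t) = false.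
  move=> lt_st; apply: contraTF lt_st => /eqP E.
  by rewrite -leqNgt -vpath_size -E size_take_min geq_minr.
have [lt_wv | gt_wv | eq_wv] := ltngtP (vlevel w) (vlevel v).
- rewrite take_takel; last by rewrite -ltnS prednK.
  by rewrite (_ : w == v = false) //; apply: contraTF lt_wv => /eqP ->; rewrite ltnn.
- rewrite (_ : w == v = false); last by apply: contraTF gt_wv => /eqP ->; rewrite ltnn.
  rewrite !take_long ?vpath_size // size_take_min vpath_size.
  exact: leq_ltn_trans (geq_minl _ _) (leq_ltn_trans (leq_pred _) gt_wv).
- rewrite eq_wv take_oversize ?vpath_size // take_long ?orbF; last first.
    by rewrite size_take_min (leq_ltn_trans (geq_minl _ _)) // eq_wv prednK.
  by rewrite eq_sym; apply/eqP/eqP => [/vpath_inj | ->].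
Qed.

Lemma sum_children_const (R : nmodType) (v : V) (x : R) : (vlevel v < d)%N ->
  \sum_(c | is_child v c) x = x *+ k.
Proof.
move=> lt_vd; rewrite -[in RHS](card_children lt_vd) -sumr_const.
by apply: eq_bigl => c; rewrite inE.
Qed.

Lemma level_partition (R : nmodType) r (F : V -> R) : (r < d)%N ->
  \sum_(c | vlevel c == r.+1) F c = \sum_(v | vlevel v == r) \sum_(c | is_child v c) F c.
Proof.
move=> lt_rd.
rewrite (partition_big parent (fun v => vlevel v == r)) => [|c /eqP lc]; last first.
  by rewrite vlevel_parent lc.
apply: eq_bigr => v /eqP lv; apply: eq_bigl => c; rewrite is_childE eq_sym.
have [pc | _] := eqVneq (parent c) v; last by rewrite !andbF.
rewrite !andbT -vlevel_eq0 -lv -pc vlevel_parent.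
by move: (vlevel c) => [|n]; rewrite ?eqxx.
Qed.

End Tree.

Lemma sum_level1 (R : pzSemiRingType) d k r : (r <= d)%N ->
  \sum_(v : vertex d k | vlevel v == r) 1 = k%:R ^+ r :> R.
Proof.
elim: r => [_ | r IHr lt_rd].
  by rewrite (big_pred1 (vroot d k)) // => v; rewrite /= vlevel_eq0.
rewrite level_partition // exprSr -(IHr (ltnW lt_rd)) mulr_suml.
by apply: eq_bigr => v /eqP lv; rewrite sum_children_const ?lv // mul1r.
Qed.

Section Flips.
Variables d k : nat.
Local Notation V := (vertex d k).
Local Notation C := (config d k).
Local Notation rt := (vroot d k).

(* A non-root vertex [w] stands for the edge into it: [edge_on_path v w] says
   that this edge lies on the path from the root to [v]. *)
Definition edge_on_path (v w : V) : bool := (w != rt) && ancestor w v.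

Definition path_parity (eta : C) (v : V) : bool :=
  \big[addb/false]_(w | edge_on_path v w) eta w.

(* [eta rt] is the root spin and, for [v != rt], [eta v] tells whether the
   edge into [v] flips the spin. *)
Definition spins_of_flips (eta : C) : C := [ffun v => eta rt (+) path_parity eta v].

Lemma edge_on_path_root (w : V) : edge_on_path rt w = false.
Proof.
by apply: contraTF isT => /andP[w_nrt /ancestor_root w_rt]; rewrite w_rt eqxx in w_nrt.
Qed.

Lemma root_not_edge_on_path (v : V) : edge_on_path v rt = false.
Proof. by rewrite /edge_on_path eqxx. Qed.

Lemma edge_on_path_level (v w : V) : edge_on_path v w -> (vlevel w <= vlevel v)%N.
Proof. by case/andP => _ /ancestor_level. Qed.

Lemma edge_on_path_deeper (v w : V) :
  (vlevel v < vlevel w)%N -> edge_on_path v w = false.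
Proof.
by move=> lt_vw; apply: contraTF lt_vw => /edge_on_path_level; rewrite leqNgt.
Qed.

Lemma edge_on_path_child (v c w : V) : is_child v c ->
  edge_on_path c w = (w == c) || edge_on_path v w.
Proof.
move=> vc; have c_nrt := is_child_neq_root vc.
move: vc; rewrite is_childE c_nrt => /eqP ->.
rewrite /edge_on_path ancestor_parent //.
by have [-> | //] := eqVneq w c; rewrite c_nrt.
Qed.

Lemma edge_on_path_child_addb (v c : V) : is_child v c ->
  edge_on_path c =1 (fun w => edge_on_path v w (+) (w == c)).
Proof.
move=> vc w; rewrite (edge_on_path_child _ vc).
have [-> | _] := eqVneq w c; last by rewrite addbF.
by rewrite edge_on_path_deeper // (is_child_level vc).
Qed.

Lemma spins_of_flips_root (eta : C) : spins_of_flips eta rt = eta rt.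
Proof.
rewrite ffunE /path_parity big_pred0 ?addbF // => w.
by rewrite edge_on_path_root.
Qed.

Lemma spins_of_flips_parent (eta : C) v : v != rt ->
  spins_of_flips eta v = spins_of_flips eta (parent v) (+) eta v.
Proof.
move=> v_nrt; have pv : is_child (parent v) v by rewrite is_childE v_nrt eqxx.
rewrite !ffunE /path_parity (bigD1 v) /=; last by rewrite (edge_on_path_child _ pv) eqxx.
rewrite addbA [RHS]addbAC; congr (_ (+) _); apply: eq_bigl => w.
rewrite (edge_on_path_child _ pv); have [-> | _] := eqVneq w v; last by rewrite andbT.
by rewrite edge_on_path_deeper // (is_child_level pv).
Qed.

Lemma spins_of_flips_inj : injective spins_of_flips.
Proof.
move=> eta1 eta2 eq_spins; apply/ffunP => v.
have [-> | v_nrt] := eqVneq v rt.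
  by rewrite -spins_of_flips_root eq_spins spins_of_flips_root.
have := spins_of_flips_parent eta1 v_nrt.
by rewrite eq_spins (spins_of_flips_parent eta2 v_nrt) => /addbI.
Qed.

Lemma root_spinE (s : C) : root_spin s = s rt.
Proof. by rewrite /root_spin (big_pred1 rt) // => v; rewrite /= vlevel_eq0. Qed.

End Flips.

Section FlipLaw.
Variables (R : realFieldType) (d k : nat) (theta : R).
Local Notation V := (vertex d k).
Local Notation C := (config d k).
Local Notation rt := (vroot d k).

Lemma config_prob_parent (s : C) : config_prob theta s =
  1 / 2 * \prod_(v | v != rt) edge_weight theta (s (parent v)) (s v).
Proof.
rewrite /config_prob; congr (_ * _).
rewrite (exchange_big_dep predT) //= [RHS]big_mkcond /=; apply: eq_bigr => v _.
have [-> | v_nrt] := eqVneq v rt.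
  by rewrite big_pred0 // => u; rewrite is_childE eqxx.
by rewrite (big_pred1 (parent v)) // => u; rewrite /= is_childE v_nrt.
Qed.

Lemma config_prob_spins_of_flips (eta : C) : config_prob theta (spins_of_flips eta) =
  1 / 2 * \prod_(v | v != rt) edge_weight theta false (eta v).
Proof.
rewrite config_prob_parent; congr (_ * _); apply: eq_bigr => v v_nrt.
rewrite (spins_of_flips_parent eta v_nrt) /edge_weight.
by case: (spins_of_flips eta (parent v)); case: (eta v).
Qed.

(* The flips jointly with the event that the root spin is 1: each edge flips
   independently with probability (1 - theta) / 2. *)
Definition flip_weight (v : V) (b : bool) : R :=
  if v == rt then b%:R / 2 else edge_weight theta false b.

Definition flip_law (eta : C) : R := \prod_v flip_weight v (eta v).

Lemma sum_root_spin_flips (F : C -> R) :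
  \sum_s config_prob theta s * (root_spin s)%:R * F s =
  \sum_eta flip_law eta * F (spins_of_flips eta).
Proof.
rewrite (reindex_inj (@spins_of_flips_inj d k)); apply: eq_bigr => eta _.
rewrite config_prob_spins_of_flips root_spinE spins_of_flips_root.
rewrite /flip_law [in RHS](bigD1 rt) //= /flip_weight eqxx.
rewrite [in RHS](eq_bigr (fun v => edge_weight theta false (eta v))); first ring.
by move=> v /negbTE ->.
Qed.

Lemma flip_law_eq0 (eta : C) : ~~ eta rt -> flip_law eta = 0.
Proof.
move/negbTE=> eta_rt.
by rewrite /flip_law (bigD1 rt) //= /flip_weight eqxx eta_rt !mul0r.
Qed.

Definition flip_sign (S : V -> bool) (eta : C) : R := \prod_w (-1) ^+ (eta w && S w).

Lemma flip_signM S S' (eta : C) :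
  flip_sign S eta * flip_sign S' eta = flip_sign (fun w => S w (+) S' w) eta.
Proof.
by rewrite -big_split; apply: eq_bigr => w _; rewrite /= -signr_addb andb_addr.
Qed.

Lemma flip_sign0 (eta : C) : flip_sign (fun _ => false) eta = 1.
Proof. by apply: big1 => w _; rewrite andbF. Qed.

Definition parity_weight (S : V -> bool) : R := \prod_(v | v != rt) theta ^+ S v.

Lemma sum_flip_law_sign (S : V -> bool) : ~~ S rt ->
  \sum_eta flip_law eta * flip_sign S eta = 1 / 2 * parity_weight S.
Proof.
move=> S_rt; under eq_bigr do rewrite -big_split /=.
rewrite -(bigA_distr_bigA (fun v b => flip_weight v b * (-1) ^+ (b && S v))) /=.
rewrite (bigD1 rt) //= big_bool /flip_weight eqxx (negbTE S_rt) /=.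
congr (_ * _); first lra.
apply: eq_bigr => v v_nrt; rewrite big_bool (negbTE v_nrt) /edge_weight /=.
by case: (S v); rewrite /= ?expr1 ?expr0; lra.
Qed.

Lemma sum_flip_law : \sum_eta flip_law eta = 1 / 2.
Proof.
have -> : 1 / 2 = 1 / 2 * parity_weight xpred0 by rewrite /parity_weight big1 ?mulr1.
by rewrite -sum_flip_law_sign //; apply: eq_bigr => eta _; rewrite flip_sign0 mulr1.
Qed.

Lemma sum_flip_law_sum_sign (I : finType) (P : pred I) (S : I -> V -> bool) :
    (forall i, ~~ S i rt) ->
  \sum_eta flip_law eta * \sum_(i | P i) flip_sign (S i) eta =
  1 / 2 * \sum_(i | P i) parity_weight (S i).
Proof.
move=> S_rt; rewrite mulr_sumr; under eq_bigr do rewrite mulr_sumr.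
by rewrite exchange_big; apply: eq_bigr => i _; apply: sum_flip_law_sign.
Qed.

Lemma spin_sign_flips (eta : C) v : eta rt ->
  (-1) ^+ (~~ spins_of_flips eta v) = flip_sign (edge_on_path v) eta.
Proof.
move=> eta_rt; rewrite ffunE eta_rt negbK /path_parity.
rewrite (big_morph _ (@signr_addb R) (erefl : (-1) ^+ false = 1 :> R)) big_mkcond.
by apply: eq_bigr => w _; case: (edge_on_path v w); rewrite ?andbT ?andbF.
Qed.

End FlipLaw.

Arguments flip_sign {R d k}.

Section Moments.
Variables (R : realFieldType) (d k : nat) (theta : R).
Local Notation V := (vertex d k).
Local Notation C := (config d k).
Local Notation rt := (vroot d k).

Definition magnetization (s : C) : R := \sum_(l : V | vlevel l == d) (-1) ^+ (~~ s l).

(* Given root spin 1, the conditional mean and second moment of the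
   magnetization of level [r]. *)
Definition level_moment1 r : R :=
  \sum_(v : V | vlevel v == r) parity_weight theta (edge_on_path v).

Definition level_moment2 r : R :=
  \sum_(v : V | vlevel v == r) \sum_(v' : V | vlevel v' == r)
    parity_weight theta (fun w => edge_on_path v w (+) edge_on_path v' w).

Lemma magnetizationE (s : C) : magnetization s = 2 * (leaf_sum s)%:R - (k ^ d)%:R.
Proof.
rewrite natrX -(@sum_level1 R d k d (leqnn d)) /leaf_sum natr_sum mulr_sumr -sumrB.
by apply: eq_bigr => l _; case: (s l); rewrite /= ?expr0 ?expr1; lra.
Qed.

Lemma sum_root_magnetization_dev m :
  \sum_s config_prob theta s * (root_spin s)%:R * (magnetization s - m) ^+ 2 =
  1 / 2 * (level_moment2 d - 2 * m * level_moment1 d + m ^+ 2).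
Proof.
pose leaf_sign (eta : C) : R := \sum_(l | vlevel l == d) flip_sign (edge_on_path l) eta.
pose leaf_sign2 (eta : C) : R := \sum_(l | vlevel l == d) \sum_(l' | vlevel l' == d)
  flip_sign (fun w => edge_on_path l w (+) edge_on_path l' w) eta.
have mean_sign : \sum_eta flip_law theta eta * leaf_sign eta = 1 / 2 * level_moment1 d.
  by apply: sum_flip_law_sum_sign => l; rewrite root_not_edge_on_path.
have mean_sign2 : \sum_eta flip_law theta eta * leaf_sign2 eta = 1 / 2 * level_moment2 d.
  rewrite /level_moment2 pair_big_dep -(@sum_flip_law_sum_sign _ _ _ _ _ _
    (fun p w => edge_on_path p.1 w (+) edge_on_path p.2 w)) => [|p].
    by apply: eq_bigr => eta _; rewrite /leaf_sign2 pair_big_dep.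
  by rewrite !root_not_edge_on_path.
rewrite mulrDr mulrBr [_ * (2 * m * _)]mulrCA [_ * m ^+ 2]mulrC.
rewrite -mean_sign -mean_sign2 -(@sum_flip_law R d k theta).
rewrite [2 * m * _]mulr_sumr [m ^+ 2 * _]mulr_sumr.
rewrite -sumrB -big_split sum_root_spin_flips; apply: eq_bigr => eta _ /=.
have [eta_rt | /flip_law_eq0 ->] := boolP (eta rt); last by rewrite !mul0r; ring.
rewrite /magnetization; under eq_bigr do rewrite spin_sign_flips //.
rewrite sqrrB expr2 mulr_suml (eq_bigr (fun l => \sum_(l' | vlevel l' == d)
  flip_sign (fun w => edge_on_path l w (+) edge_on_path l' w) eta)).
  by rewrite /leaf_sign /leaf_sign2; ring.
by move=> l _; rewrite mulr_sumr; apply: eq_bigr => l' _; rewrite flip_signM.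
Qed.

Lemma eq_parity_weight (S S' : V -> bool) :
  S =1 S' -> parity_weight theta S = parity_weight theta S'.
Proof. by move=> eqS; apply: eq_bigr => w _; rewrite eqS. Qed.

Lemma parity_weight_add1 (S : V -> bool) c : c != rt -> ~~ S c ->
  parity_weight theta (fun w => S w (+) (w == c)) = theta * parity_weight theta S.
Proof.
move=> c_nrt /negbTE Sc; rewrite /parity_weight (bigD1 c) //= [in RHS](bigD1 c) //=.
rewrite eqxx Sc /= expr0 mul1r; congr (_ * _).
by apply: eq_bigr => w /andP[_ /negbTE ->]; rewrite addbF.
Qed.

Lemma parity_weight_add2 (S : V -> bool) c c' : c != rt -> c' != rt ->
  ~~ S c -> ~~ S c' ->
  parity_weight theta (fun w => S w (+) (w == c) (+) (w == c')) =
  (if c == c' then 1 else theta ^+ 2) * parity_weight theta S.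
Proof.
move=> c_nrt c'_nrt Sc Sc'; have [<- | ne_cc'] := eqVneq c c'.
  by rewrite mul1r; apply: eq_bigr => w _; rewrite -addbA addbb addbF.
rewrite (parity_weight_add1 (S := fun w => S w (+) (w == c))) //; last first.
  by rewrite eq_sym (negbTE ne_cc') addbF.
by rewrite parity_weight_add1 // mulrA -expr2.
Qed.

Lemma level_moment1E r : (r <= d)%N -> level_moment1 r = (k%:R * theta) ^+ r.
Proof.
elim: r => [_ | r IHr lt_rd].
  rewrite /level_moment1 (big_pred1 rt) => [|v]; last by rewrite /= vlevel_eq0.
  by apply: big1 => w _; rewrite edge_on_path_root.
rewrite exprSr -(IHr (ltnW lt_rd)) /level_moment1 level_partition // mulr_suml.
apply: eq_bigr => v /eqP lv.
rewrite (eq_bigr (fun _ => theta * parity_weight theta (edge_on_path v))) => [|c vc].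
  by rewrite sum_children_const ?lv // -mulr_natl; ring.
rewrite (eq_parity_weight (edge_on_path_child_addb vc)).
rewrite parity_weight_add1 ?(is_child_neq_root vc) //.
by rewrite edge_on_path_deeper // (is_child_level vc).
Qed.

Lemma parity_weight_children (v v' c c' : V) :
    is_child v c -> is_child v' c' -> vlevel v = vlevel v' ->
  parity_weight theta (fun w => edge_on_path c w (+) edge_on_path c' w) =
  (if c == c' then 1 else theta ^+ 2) *
    parity_weight theta (fun w => edge_on_path v w (+) edge_on_path v' w).
Proof.
move=> vc v'c' lvv'; have lc := is_child_level vc; have lc' := is_child_level v'c'.
rewrite -parity_weight_add2 ?(is_child_neq_root vc) ?(is_child_neq_root v'c') //.
- apply: eq_parity_weight => w.
  by rewrite (edge_on_path_child_addb vc) (edge_on_path_child_addb v'c') addbACA addbA.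
- by rewrite !edge_on_path_deeper // lc ?lvv'.
- by rewrite !edge_on_path_deeper // lc' -?lvv'.
Qed.

Lemma sum_children_pairs (v v' : V) : (vlevel v < d)%N -> (vlevel v' < d)%N ->
  \sum_(c | is_child v c) \sum_(c' | is_child v' c') (if c == c' then 1 else theta ^+ 2) =
  k%:R * (k%:R * theta ^+ 2) + k%:R * (1 - theta ^+ 2) * (v == v')%:R.
Proof.
move=> lv lv'.
have same_child c : is_child v c ->
    \sum_(c' | is_child v' c') (c == c')%:R = (v == v')%:R :> R.
  move=> vc; rewrite big_mkcond (bigD1 c) //= eqxx big1 ?addr0; last first.
    by move=> c' /negbTE; rewrite eq_sym => ->; case: ifP.
  move: vc; rewrite !is_childE => /andP[-> /eqP ->].
  by rewrite eq_sym; case: eqP.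
rewrite (eq_bigr (fun c => k%:R * theta ^+ 2 + (1 - theta ^+ 2) * (v == v')%:R)).
  by rewrite sum_children_const // -mulr_natl; ring.
move=> c vc; rewrite -(same_child c vc) mulr_sumr mulr_natl.
rewrite -(sum_children_const _ lv') -big_split; apply: eq_bigr => c' _.
by case: eqP => _; rewrite /= ?mulr1 ?mulr0 ?addr0 //; ring.
Qed.

Lemma level_moment2_succ r : (r < d)%N ->
  level_moment2 r.+1 =
  (k%:R * theta) ^+ 2 * level_moment2 r + k%:R * (1 - theta ^+ 2) * k%:R ^+ r.
Proof.
move=> lt_rd; pose PW (v v' : V) :=
  parity_weight theta (fun w => edge_on_path v w (+) edge_on_path v' w).
transitivity (\sum_(v | vlevel v == r) \sum_(v' | vlevel v' == r)
   (k%:R * (k%:R * theta ^+ 2) + k%:R * (1 - theta ^+ 2) * (v == v')%:R) * PW v v').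
  rewrite /level_moment2 level_partition //; apply: eq_bigr => v /eqP lv.
  under eq_bigr do rewrite level_partition //.
  rewrite exchange_big /=; apply: eq_bigr => v' /eqP lv'.
  rewrite -sum_children_pairs ?lv ?lv' // mulr_suml; apply: eq_bigr => c vc.
  rewrite mulr_suml; apply: eq_bigr => c' v'c'.
  by rewrite (parity_weight_children vc v'c') ?lv ?lv'.
rewrite /level_moment2 -(@sum_level1 R d k r (ltnW lt_rd)) !mulr_sumr -big_split.
apply: eq_bigr => v lv; under eq_bigr do rewrite mulrDl.
rewrite big_split -mulr_sumr.
rewrite (_ : k%:R * (k%:R * theta ^+ 2) = (k%:R * theta) ^+ 2); last by ring.
congr (_ + _); rewrite (bigD1 v) //= eqxx big1 => [|v' /andP[_ /negbTE]]; last first.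
  by rewrite eq_sym => ->; rewrite mulr0 mul0r.
by rewrite addr0 mulr1 [PW v v]big1 ?mulr1 // => w _; rewrite addbb.
Qed.

Lemma level_moment2_le r : 1 <= k%:R * theta ^+ 2 -> (r <= d)%N ->
  level_moment2 r * (k%:R * theta ^+ 2 - 1) <=
  k%:R ^+ r * ((k%:R * theta ^+ 2) ^+ r.+1 - 1).
Proof.
set x := k%:R * theta ^+ 2 => x_ge1; elim: r => [_ | r IHr lt_rd].
  rewrite /level_moment2 !(big_pred1 rt) => [|v|v]; rewrite /= ?vlevel_eq0 //.
  by rewrite [parity_weight _ _]big1 ?mul1r // => w _; rewrite addbb.
pose K : R := k%:R ^+ r; pose P := x ^+ r.+1.
have K_ge0 : 0 <= K by rewrite exprn_ge0.
have kx_ge0 : 0 <= k%:R * x by rewrite mulr_ge0 // (le_trans ler01 x_ge1).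
have step : k%:R * x * (level_moment2 r * (x - 1)) <= k%:R * x * (K * (P - 1)).
  exact/ler_wpM2l/IHr/ltnW.
have slack : 0 <= k%:R * K * (x - 1) * theta ^+ 2.
  by rewrite mulr_ge0 ?sqr_ge0 // mulr_ge0 ?subr_ge0 // mulr_ge0.
have -> : level_moment2 r.+1 * (x - 1) = k%:R * x * (level_moment2 r * (x - 1)) +
    k%:R * K * (x - 1) - k%:R * K * (x - 1) * theta ^+ 2.
  by rewrite level_moment2_succ // /x /K; ring.
have -> : k%:R ^+ r.+1 * (x ^+ r.+2 - 1) = k%:R * x * (K * (P - 1)) + k%:R * K * (x - 1).
  by rewrite /K /P !exprS; ring.
lra.
Qed.

End Moments.

Lemma sum_le_second_moment (R : realFieldType) (T : finType) (p Z : T -> R)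
    (E : pred T) (m : R) :
    0 < m -> (forall t, 0 <= p t) -> (forall t, E t -> Z t <= 0) ->
  \sum_(t | E t) p t <= \sum_t p t * (Z t - m) ^+ 2 / m ^+ 2.
Proof.
move=> m_gt0 p_ge0 EZ; rewrite [X in _ <= X](bigID E) /=; apply: ler_wpDr.
  by apply: sumr_ge0 => t _; rewrite mulr_ge0 ?invr_ge0 ?sqr_ge0 // mulr_ge0 ?sqr_ge0.
apply: ler_sum => t Et; rewrite -mulrA ler_peMr // ler_pdivlMr ?exprn_gt0 // mul1r.
have := EZ t Et; nra.
Qed.

Lemma config_prob_ge0 (R : realFieldType) d k (theta : R) (s : config d k) :
  `|theta| <= 1 -> 0 <= config_prob theta s.
Proof.
rewrite ler_norml => /andP[lb ub]; rewrite mulr_ge0 ?divr_ge0 //.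
apply: prodr_ge0 => u _; apply: prodr_ge0 => v _.
by rewrite /edge_weight; case: ifP => _; apply: divr_ge0; lra.
Qed.

Lemma Prob_root_spin (R : realFieldType) d k (theta : R) :
  Prob theta (fun s : config d k => root_spin s) = 1 / 2.
Proof.
rewrite -(@sum_flip_law R d k theta) /Prob big_mkcond.
under [RHS]eq_bigr do rewrite -[flip_law _ _]mulr1.
rewrite -(sum_root_spin_flips theta (fun => 1)); apply: eq_bigr => s _.
by case: (root_spin s); rewrite /= ?mulr1 ?mulr0.
Qed.

Lemma Prob_leaf_minority_root_le (R : realFieldType) d k (theta : R) :
    (0 < k)%N -> 0 < theta -> theta <= 1 ->
  Prob theta (predI (fun s : config d k => (leaf_sum s)%:R <= (k ^ d)%:R / 2 :> R)
                    (fun s => root_spin s)) <=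
  1 / 2 * (level_moment2 d k theta d - ((k%:R * theta) ^+ d) ^+ 2) /
    ((k%:R * theta) ^+ d) ^+ 2.
Proof.
move=> k_gt0 theta_gt0 theta_le1; set m := (k%:R * theta) ^+ d.
have m_gt0 : 0 < m by rewrite exprn_gt0 // mulr_gt0 ?ltr0n.
have p_ge0 (s : config d k) : 0 <= config_prob theta s * (root_spin s)%:R.
  by rewrite mulr_ge0 ?ler0n // config_prob_ge0 // ger0_norm // ltW.
have := sum_le_second_moment (Z := @magnetization R d k)
  (E := fun s => (leaf_sum s)%:R <= (k ^ d)%:R / 2 :> R) m_gt0 p_ge0.
rewrite -mulr_suml sum_root_magnetization_dev level_moment1E // -/m.
have -> : level_moment2 d k theta d - 2 * m * m + m ^+ 2 =
          level_moment2 d k theta d - m ^+ 2 by ring.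
rewrite /Prob big_mkcondr /= => bound; apply: le_trans (bound _) => [|s].
  by apply: ler_sum => s _; case: (root_spin s); rewrite ?mulr1 ?mulr0.
by rewrite magnetizationE; lra.
Qed.

Lemma relative_excess_le (R : realFieldType) (M K x : R) n : 0 < K -> 1 < x ->
  M * (x - 1) <= K * (x ^+ n.+1 - 1) -> (M - K * x ^+ n) / (K * x ^+ n) <= 1 / (x - 1).
Proof.
move=> K_gt0 x_gt1; rewrite exprS; set y := x ^+ n => bound.
have y_gt0 : 0 < y by rewrite exprn_gt0 // (lt_trans ltr01).
rewrite ler_pdivrMr ?mulr_gt0 // [_ * (K * y)]mulrC mul1r ler_pdivlMr ?subr_gt0 //.
nra.
Qed.

Unset Implicit Arguments.

Theorem mainTheorem10 (R : realFieldType) (d k : nat) (theta : R) :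
  (2 <= k)%N -> 0 < theta -> theta <= 1 -> 2 < k%:R * theta ^+ 2 ->
  CondProb theta
    (fun s : config d k => (leaf_sum s)%:R <= (k ^ d)%:R / 2 :> R)
    (fun s : config d k => root_spin s)
  <= 1 / (theta ^+ 2 * k%:R - 1).
Proof.
move=> k_ge2 theta_gt0 theta_le1 x_gt2.
have k_gt0 : (0 < k)%N by apply: leq_trans k_ge2.
have x_gt1 : 1 < k%:R * theta ^+ 2 by apply: lt_trans x_gt2; rewrite ltr1n.
have mean_sq : ((k%:R * theta) ^+ d) ^+ 2 = k%:R ^+ d * (k%:R * theta ^+ 2) ^+ d.
  by rewrite -exprM mulnC exprM -exprMn; congr (_ ^+ d); ring.
rewrite /CondProb Prob_root_spin ler_pdivrMr ?divr_gt0 // (mulrC (theta ^+ 2)).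
apply: le_trans (Prob_leaf_minority_root_le _ k_gt0 theta_gt0 theta_le1) _.
rewrite -mulrA [_ * (1 / 2)]mulrC; apply: ler_wpM2l; first by rewrite divr_ge0.
rewrite mean_sq; apply: relative_excess_le; rewrite ?exprn_gt0 ?ltr0n //.
exact: level_moment2_le (ltW x_gt1) (leqnn d).
Qed.
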